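(* In the algebra $(\mathbb Z,+,\mathbb Z)$, for all $a,b,c,d,e,f,g,h\in\mathbb Z$: if $a:b::_m c:d$ and $e:f::_m g:h$, then $a+e:b+f::_m c+g:d+h$.
   Context: $(\mathbb Z,+,\mathbb Z)$ is the algebra with universe $\mathbb Z$, addition, and every integer as a constant. A justification is a pair of terms $s\to t$ with the variables of $t$ among those of $s$; monolinear justifications are those where $s,t$ contain only one fixed variable $x$, occurring at most once in $s$ and at most once in $t$. $\uparrow^m(a\to b)$ is the set of monolinear justifications $s\to t$ with $a=s(\mathbf o)$, $b=t(\mathbf o)$ for some value $\mathbf o$; $\uparrow^m(a\to b:\!\cdot\,c\to d):=\uparrow^m(a\to b)\cap\uparrow^m(c\to d)$. A monolinear justification is trivial if it lies in all sets $\uparrow^m(a'\to b':\!\cdot\,c'\to d')$. $a\to b:\!\cdot_m\,c\to d$ holds iff either (i) all justifications in $\uparrow^m(a\to b)\cup\uparrow^m(c\to d)$ are trivial, or (ii) $J_d:=\uparrow^m(a\to b:\!\cdot\,c\to d)$ contains a non-trivial justification and for every $d'$, $J_d\subseteq J_{d'}$ implies $J_{d'}$ contains a non-trivial justification and $J_{d'}\subseteq J_d$ (ignoring trivial justifications). $a:b::_m c:d$ iff $a\to b:\!\cdot_m\,c\to d$, $b\to a:\!\cdot_m\,d\to c$, $c\to d:\!\cdot_m\,a\to b$, $d\to c:\!\cdot_m\,b\to a$ all hold. *)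

From Stdlib Require Import ZArith.
Open Scope Z_scope.

(* Terms of the algebra (Z,+,Z) over the single fixed variable x
   (monolinear justifications can only mention x). *)
Inductive term : Type :=
| TVar : term
| TConst : Z -> term
| TAdd : term -> term -> term.

Fixpoint occ (t : term) : nat :=
  match t with
  | TVar => 1%nat
  | TConst _ => 0%nat
  | TAdd t1 t2 => (occ t1 + occ t2)%nat
  end.

Fixpoint eval (t : term) (o : Z) : Z :=
  match t with
  | TVar => o
  | TConst z => z
  | TAdd t1 t2 => eval t1 o + eval t2 o
  end.

(* a justification s -> t *)
Definition just := (term * term)%type.

Definition monolinear (j : just) : Prop :=
  (occ (fst j) <= 1)%nat /\ (occ (snd j) <= 1)%nat /\
  ((0 < occ (snd j))%nat -> (0 < occ (fst j))%nat).

Definition up (a b : Z) (j : just) : Prop :=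
  monolinear j /\ exists o : Z, eval (fst j) o = a /\ eval (snd j) o = b.

Definition up2 (a b c d : Z) (j : just) : Prop := up a b j /\ up c d j.

Definition trivial (j : just) : Prop :=
  monolinear j /\ forall a' b' c' d' : Z, up2 a' b' c' d' j.

Definition arrow_prop (a b c d : Z) : Prop :=
  (forall j, (up a b j \/ up c d j) -> trivial j)
  \/
  ((exists j, up2 a b c d j /\ ~ trivial j) /\
   forall d' : Z,
     (forall j, ~ trivial j -> up2 a b c d j -> up2 a b c d' j) ->
     (exists j, up2 a b c d' j /\ ~ trivial j) /\
     (forall j, ~ trivial j -> up2 a b c d' j -> up2 a b c d j)).

Definition analogy (a b c d : Z) : Prop :=
  arrow_prop a b c d /\ arrow_prop b a d c /\
  arrow_prop c d a b /\ arrow_prop d c b a.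

From Stdlib Require Import ZArith Lia.
Open Scope Z_scope.

(* A monolinear justification s -> t either has a constant target, so it pins
   down b, or has x on both sides, so it is a translation and pins down b - a.
   Hence no justification is trivial (none lies over both 0 -> 0 and 0 -> 1),
   clause (i) never holds, and a common justification of a -> b and c -> d
   forces b = d or b - a = d - c; together with the symmetric condition for
   b -> a and d -> c this gives a - b = c - d.  Conversely, the translation
   x -> x + (b - a) justifies both arrows and determines d, which yields
   clause (ii).  So a : b ::_m c : d is the arithmetic proportion
   a - b = c - d, and these are closed under addition. *)

Lemma eval_affine (t : term) (o : Z) :
  eval t o = Z.of_nat (occ t) * o + eval t 0.
Proof.
  induction t as [| z | t1 IH1 t2 IH2]; cbn [eval occ]; [lia | lia |].
  rewrite IH1, IH2, Nat2Z.inj_add. lia.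
Qed.

Lemma up_inv (a b : Z) (j : just) : up a b j ->
  (occ (snd j) = 0%nat /\ b = eval (snd j) 0) \/
  (occ (fst j) = 1%nat /\ occ (snd j) = 1%nat /\
   b - a = eval (snd j) 0 - eval (fst j) 0).
Proof.
  destruct j as [s t]; unfold up, monolinear; simpl.
  intros [[Hs [Ht Hvar]] [o [Ea Eb]]].
  rewrite eval_affine in Ea, Eb.
  destruct (occ t) as [| [| k]]; [left | right | lia]; simpl in *; [lia |].
  destruct (occ s) as [| [| k]]; simpl in *; lia.
Qed.

Lemma not_trivial (j : just) : ~ trivial j.
Proof.
  intros [_ Hall].
  destruct (Hall 0 0 0 0) as [H00 _], (Hall 0 1 0 0) as [H01 _].
  apply up_inv in H00; apply up_inv in H01. lia.
Qed.

Definition shift_just (k : Z) : just := (TVar, TAdd TVar (TConst k)).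

Lemma up_shift_just (k a b : Z) : up a b (shift_just k) <-> b = a + k.
Proof.
  split.
  - intros [_ [o [Ea Eb]]]. simpl in Ea, Eb. lia.
  - intros ->. split; [unfold monolinear; simpl; lia | exists a; simpl; auto].
Qed.

Lemma arrow_prop_inv (a b c d : Z) :
  arrow_prop a b c d -> b = d \/ b - a = d - c.
Proof.
  intros [Hall | [[j [[Hab Hcd] _]] _]].
  - exfalso. apply (not_trivial (TConst a, TConst b)), Hall. left.
    split; [unfold monolinear; simpl; lia | exists 0; simpl; auto].
  - apply up_inv in Hab; apply up_inv in Hcd. lia.
Qed.

Lemma arrow_prop_of_diff (a b c d : Z) : b - a = d - c -> arrow_prop a b c d.
Proof.
  intros Hdiff. right.
  assert (Hj : up2 a b c d (shift_just (b - a))).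
  { split; apply up_shift_just; lia. }
  assert (Hex : exists j, up2 a b c d j /\ ~ trivial j)
    by (exists (shift_just (b - a)); split; [exact Hj | apply not_trivial]).
  split; [exact Hex |].
  intros d' Hsub.
  destruct (Hsub _ (not_trivial _) Hj) as [_ Hcd'].
  apply up_shift_just in Hcd'.
  replace d' with d by lia. split; auto.
Qed.

Lemma analogy_iff_diff (a b c d : Z) : analogy a b c d <-> a - b = c - d.
Proof.
  split.
  - intros [Habcd [Hbadc _]].
    apply arrow_prop_inv in Habcd; apply arrow_prop_inv in Hbadc. lia.
  - intros Hdiff. repeat split; apply arrow_prop_of_diff; lia.
Qed.

Theorem mainTheorem6 (a b c d e f g h : Z) :
  analogy a b c d -> analogy e f g h ->
  analogy (a + e) (b + f) (c + g) (d + h).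
Proof.
  rewrite !analogy_iff_diff. lia.
Qed.
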